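(* Let $\mathbf{a}\in\mathbb{C}^n$, $\beta>0$ and $f(\mathbf{z})=\frac12|\mathbf{a}^*\mathbf{z}|^2+\frac{\beta}{2}\|\mathbf{z}\|_4^4$. If $\mathbf{z}$ is a local minimizer of $f$ on $\mathbb{CS}^{n-1}$ with $\mathbf{a}^*\mathbf{z}=0$, then $\mathbf{z}$ has at most one zero component, and all nonzero components of $\mathbf{z}$ have the same modulus.
   Context: $\mathbb{CS}^{n-1}=\{\mathbf{z}\in\mathbb{C}^n:\|\mathbf{z}\|_2=1\}$; $\|\mathbf{z}\|_4^4=\sum_k|z_k|^4$. *)

From HB Require Import structures.
From mathcomp Require Import all_boot all_order all_algebra.
From mathcomp Require Import complex.
From mathcomp Require Import reals.
Set Implicit Arguments. Unset Strict Implicit. Unset Printing Implicit Defensive.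
Import Order.TTheory GRing.Theory Num.Theory.
Local Open Scope ring_scope.

Section Defs.
Variable R : realType.

Definition cmod (x : R[i]) : R := Num.sqrt (complex.Re x ^+ 2 + complex.Im x ^+ 2).

Definition cdot n (a z : 'I_n -> R[i]) : R[i] := \sum_k conjc (a k) * z k.

Definition norm2 n (z : 'I_n -> R[i]) : R := Num.sqrt (\sum_k cmod (z k) ^+ 2).

Definition norm4_4 n (z : 'I_n -> R[i]) : R := \sum_k cmod (z k) ^+ 4.

Definition on_csphere n (z : 'I_n -> R[i]) : Prop := norm2 z = 1.

Definition fobj n (a : 'I_n -> R[i]) (beta : R) (z : 'I_n -> R[i]) : R :=
  2^-1 * cmod (cdot a z) ^+ 2 + beta / 2 * norm4_4 z.

Definition local_min_on_csphere n (g : ('I_n -> R[i]) -> R) (z : 'I_n -> R[i]) : Prop :=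
  on_csphere z /\
  exists eps : R, 0 < eps /\
    forall w : 'I_n -> R[i], on_csphere w -> norm2 (fun k => w k - z k) < eps ->
      g z <= g w.
End Defs.

From HB Require Import structures.
From mathcomp Require Import all_boot all_order all_algebra.
From mathcomp Require Import complex.
From mathcomp Require Import reals.
From mathcomp Require Import ring lra.
Import Order.TTheory GRing.Theory Num.Theory.
Local Open Scope ring_scope.
Local Open Scope complex_scope.

(* If two coordinates j, k of z vanish, some u supported on {j, k} satisfies
   a^* u = 0; then w = sqrt (1 - T |u|^2) z + sqrt T u stays on the sphere with
   a^* w = 0, and ||w||_4^4 = (1 - T |u|^2)^2 ||z||_4^4 + T^2 ||u||_4^4 drops at
   first order in T.  If |z_j|^2 = p and |z_k|^2 = q differ, rescaling z_j
   and z_k so that their squared moduli become p + s and q - s, with s = +-T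
   of sign making s (p - q) = - T |p - q|, keeps ||w||_2 = 1, changes
   ||w||_4^4 by - 2 T |p - q| + 2 T^2 and, since a^* z = 0, changes
   |a^* w|^2 only by O(T^2). *)

Set Implicit Arguments.
Unset Strict Implicit.

Section SquaredModulus.
Variable R : rcfType.
Implicit Types (x y : R[i]) (c t : R).

Definition sqmod x : R := complex.Re x ^+ 2 + complex.Im x ^+ 2.

Lemma sqmod_ge0 x : 0 <= sqmod x.
Proof. by rewrite addr_ge0 ?sqr_ge0. Qed.

Lemma sqmod0 : sqmod 0 = 0.
Proof. by rewrite /sqmod /= expr0n addr0. Qed.

Lemma sqmod_eq0 x : (sqmod x == 0) = (x == 0).
Proof.
by case: x => u v; rewrite /sqmod paddr_eq0 ?sqr_ge0 // !sqrf_eq0 eq_complex.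
Qed.

Lemma sqmod_gt0 x : (0 < sqmod x) = (x != 0).
Proof. by rewrite lt_def sqmod_ge0 andbT sqmod_eq0. Qed.

Lemma sqmodM x y : sqmod (x * y) = sqmod x * sqmod y.
Proof. by case: x y => [u v] [u' v']; rewrite /sqmod /=; ring. Qed.

Lemma sqmodJ x : sqmod (conjc x) = sqmod x.
Proof. by case: x => u v; rewrite /sqmod /=; ring. Qed.

Lemma sqmodZ c x : sqmod (c%:C * x) = c ^+ 2 * sqmod x.
Proof. by case: x => u v; rewrite /sqmod /=; ring. Qed.

Lemma sqmodZ_subr c x : sqmod (c%:C * x - x) = (c - 1) ^+ 2 * sqmod x.
Proof. by case: x => u v; rewrite /sqmod /=; ring. Qed.

Lemma sqmodD_le x y : sqmod (x + y) <= 2 * sqmod x + 2 * sqmod y.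
Proof.
case: x y => [u v] [u' v']; rewrite /sqmod /=.
have := sqr_ge0 (u - u'); have := sqr_ge0 (v - v'); nra.
Qed.

Lemma sqmod_disjoint c t x y : x = 0 \/ y = 0 ->
  sqmod (c%:C * x + t%:C * y) = c ^+ 2 * sqmod x + t ^+ 2 * sqmod y.
Proof. by case=> ->; case: x y => [u v] [u' v']; rewrite /sqmod /=; ring. Qed.

End SquaredModulus.

Lemma sqr_sqrtr_sub1_le (R : rcfType) (x : R) :
  0 <= x -> (Num.sqrt x - 1) ^+ 2 <= (x - 1) ^+ 2.
Proof.
move=> x_ge0; rewrite -{2}(sqr_sqrtr x_ge0).
set r := Num.sqrt x; have r_ge0 : 0 <= r := sqrtr_ge0 x.
have -> : (r ^+ 2 - 1) ^+ 2 = (r - 1) ^+ 2 * (r + 1) ^+ 2 by ring.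
by rewrite ler_peMr ?sqr_ge0 //; nra.
Qed.

Lemma sqr_sqrt_ratio_sub1_le (R : rcfType) (p s : R) : 0 < p -> 0 <= p + s ->
  (Num.sqrt ((p + s) / p) - 1) ^+ 2 * p <= s ^+ 2 / p.
Proof.
move=> p0 ps; have := sqr_sqrtr_sub1_le (divr_ge0 ps (ltW p0)).
have -> : (p + s) / p - 1 = s / p by field; rewrite gt_eqF.
have -> : s ^+ 2 / p = (s / p) ^+ 2 * p by field; rewrite gt_eqF.
by move/(ler_wpM2r (ltW p0)).
Qed.

Section SmallPositive.
Variable R : realFieldType.
Implicit Types (P Q : R -> Prop) (c K : R).

Definition for_small_pos P :=
  exists2 d : R, 0 < d & forall T, 0 < T -> T <= d -> P T.

Lemma for_small_pos_and P Q :
  for_small_pos P -> for_small_pos Q -> for_small_pos (fun T => P T /\ Q T).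
Proof.
move=> [d d0 hP] [d' d'0 hQ]; exists (Num.min d d'); first by rewrite lt_min d0.
by move=> T T0; rewrite le_min => /andP [Td Td']; split; [apply: hP | apply: hQ].
Qed.

Lemma for_small_pos_mulr_lt c K : 0 < c -> for_small_pos (fun T => T * K < c).
Proof.
move=> c0; have nK0 : 0 < `|K| + 1 by rewrite ltr_wpDl.
exists (c / (`|K| + 1)); first by rewrite divr_gt0.
move=> T T0; rewrite ler_pdivlMr // => hT.
have := ler_norm K; nra.
Qed.

Lemma for_small_pos_sqr_mulr_lt c K :
  0 < c -> 0 <= K -> for_small_pos (fun T => T ^+ 2 * K < c).
Proof.
move=> c0 K0; have [d d0 h] := for_small_pos_and
  (for_small_pos_mulr_lt 1 ltr01) (for_small_pos_mulr_lt K c0).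
by exists d => // T T0 /(h _ T0) []; rewrite mulr1; nra.
Qed.

Lemma for_small_pos_witness P : for_small_pos P -> exists2 T, 0 < T & P T.
Proof. by move=> [d d0 h]; exists d => //; apply: h. Qed.

End SmallPositive.

Section Vectors.
Variables (R : realType) (n : nat).
Implicit Types (a w x y z : 'I_n -> R[i]) (g : ('I_n -> R[i]) -> R).

Definition sqnorm w : R := \sum_k sqmod (w k).

Lemma sqnorm_ge0 w : 0 <= sqnorm w.
Proof. by rewrite sumr_ge0 // => k _; rewrite sqmod_ge0. Qed.

Lemma cmod_sqr (x : R[i]) : cmod x ^+ 2 = sqmod x.
Proof. by rewrite sqr_sqrtr ?sqmod_ge0. Qed.

Lemma norm2E w : norm2 w = Num.sqrt (sqnorm w).
Proof. by congr Num.sqrt; apply: eq_bigr => k _; rewrite cmod_sqr. Qed.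

Lemma norm2_lt w e : 0 < e -> (norm2 w < e) = (sqnorm w < e ^+ 2).
Proof.
move=> e0; rewrite norm2E -(@ltr_sqrt _ _ (e ^+ 2)) ?exprn_gt0 //.
by rewrite sqrtr_sqr gtr0_norm.
Qed.

Lemma on_csphereE w : on_csphere w <-> sqnorm w = 1.
Proof.
rewrite /on_csphere norm2E; split=> [w1|->]; last exact: sqrtr1.
by rewrite -(sqr_sqrtr (sqnorm_ge0 w)) w1 expr1n.
Qed.

Lemma norm4_4E w : norm4_4 w = \sum_k sqmod (w k) ^+ 2.
Proof. by apply: eq_bigr => k _; rewrite -cmod_sqr -exprM. Qed.

Lemma norm4_4_gt0 w : 0 < sqnorm w -> 0 < norm4_4 w.
Proof.
have sq_ge0 k : 0 <= sqmod (w k) ^+ 2 by rewrite sqr_ge0.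
rewrite norm4_4E !lt_def sqnorm_ge0 sumr_ge0 // !andbT /sqnorm.
rewrite !psumr_neq0 // => [|k _]; last exact: sqmod_ge0.
by apply: sub_has => k /= /(exprn_gt0 2).
Qed.

Lemma fobjE a beta w :
  fobj a beta w = 2^-1 * sqmod (cdot a w) + beta / 2 * norm4_4 w.
Proof. by rewrite /fobj cmod_sqr. Qed.

Lemma cdot_lin a c d x y :
  cdot a (fun k => c * x k + d * y k) = c * cdot a x + d * cdot a y.
Proof.
rewrite /cdot !mulr_sumr -big_split /=.
by apply: eq_bigr => k _; ring.
Qed.

Lemma sum_supp2 (V : nmodType) (F : 'I_n -> V) j k : j != k ->
  (forall i, i != j -> i != k -> F i = 0) -> \sum_i F i = F j + F k.
Proof.
move=> jk F0; rewrite (bigD1 j) //= (bigD1 k) 1?eq_sym //= big1 ?addr0 //.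
by move=> i /andP [ij ik]; apply: F0.
Qed.

Lemma sum_update2 (T : Type) (V : zmodType) (F : 'I_n -> T -> V)
    (u v : 'I_n -> T) j k : j != k -> (forall i, i != j -> i != k -> u i = v i) ->
  \sum_i F i (u i) =
    \sum_i F i (v i) + (F j (u j) - F j (v j)) + (F k (u k) - F k (v k)).
Proof.
move=> jk uv; rewrite -addrA -(sum_supp2 (F := fun i => F i (u i) - F i (v i))) //.
  by rewrite sumrB addrC subrK.
by move=> i ij ik; rewrite uv ?subrr.
Qed.

Lemma exists_cdot_eq0_supp2 a j k : j != k ->
  exists u, [/\ cdot a u = 0, 0 < sqnorm u &
              forall i, i != j -> i != k -> u i = 0].
Proof.
move=> jk.
pose pair (x y : R[i]) i := if i == j then x else if i == k then y else 0.
have pair0 (x y : R[i]) i : i != j -> i != k -> pair x y i = 0.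
  by move=> /negPf ij /negPf ik; rewrite /pair ij ik.
have pairj (x y : R[i]) : pair x y j = x by rewrite /pair eqxx.
have pairk (x y : R[i]) : pair x y k = y by rewrite /pair eq_sym (negPf jk) eqxx.
have cdot_pair (x y : R[i]) :
    cdot a (pair x y) = conjc (a j) * x + conjc (a k) * y.
  rewrite /cdot (sum_supp2 jk) ?pairj ?pairk // => i ij ik.
  by rewrite pair0 ?mulr0.
have sqnorm_pair (x y : R[i]) : sqnorm (pair x y) = sqmod x + sqmod y.
  rewrite /sqnorm (sum_supp2 jk) ?pairj ?pairk // => i ij ik.
  by rewrite pair0 ?sqmod0.
have [aj0|aj0] := eqVneq (a j) 0.
  exists (pair 1 0); split; last exact: pair0.
    by rewrite cdot_pair aj0 conjc0 !mulr0 addr0 mul0r.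
  by rewrite sqnorm_pair sqmod0 addr0 sqmod_gt0 oner_neq0.
exists (pair (- conjc (a k)) (conjc (a j))); split; last exact: pair0.
  by rewrite cdot_pair mulrN mulrC addrC subrr.
by rewrite sqnorm_pair ltr_wpDl ?sqmod_ge0 // sqmod_gt0 fmorph_eq0.
Qed.

Lemma sqnorm_disjoint c t x y : (forall i, x i = 0 \/ y i = 0) ->
  sqnorm (fun i => c%:C * x i + t%:C * y i) =
    c ^+ 2 * sqnorm x + t ^+ 2 * sqnorm y.
Proof.
move=> xy; rewrite /sqnorm !mulr_sumr -big_split /=.
by apply: eq_bigr => i _; rewrite sqmod_disjoint.
Qed.

Lemma norm4_4_disjoint c t x y : (forall i, x i = 0 \/ y i = 0) ->
  norm4_4 (fun i => c%:C * x i + t%:C * y i) =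
    c ^+ 4 * norm4_4 x + t ^+ 4 * norm4_4 y.
Proof.
move=> xy; rewrite !norm4_4E !mulr_sumr -big_split /=.
by apply: eq_bigr => i _; rewrite sqmod_disjoint //; case: (xy i) => ->;
  rewrite sqmod0; ring.
Qed.

Definition rescale2 z j k (cj ck : R) i :=
  if i == j then cj%:C * z i else if i == k then ck%:C * z i else z i.

Section Rescale2.
Variables (z : 'I_n -> R[i]) (j k : 'I_n) (cj ck : R).
Hypothesis jk : j != k.
Let w := rescale2 z j k cj ck.

Let w_off i : i != j -> i != k -> w i = z i.
Proof. by move=> /negPf ij /negPf ik; rewrite /w /rescale2 ij ik. Qed.

Let wj : w j = cj%:C * z j.
Proof. by rewrite /w /rescale2 eqxx. Qed.

Let wk : w k = ck%:C * z k.
Proof. by rewrite /w /rescale2 eq_sym (negPf jk) eqxx. Qed.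

Lemma sqnorm_rescale2 : sqnorm w =
  sqnorm z + (cj ^+ 2 - 1) * sqmod (z j) + (ck ^+ 2 - 1) * sqmod (z k).
Proof.
rewrite /sqnorm (sum_update2 (fun _ => @sqmod R) jk w_off).
by rewrite wj wk !sqmodZ; ring.
Qed.

Lemma norm4_4_rescale2 : norm4_4 w =
  norm4_4 z + (cj ^+ 4 - 1) * sqmod (z j) ^+ 2 +
  (ck ^+ 4 - 1) * sqmod (z k) ^+ 2.
Proof.
rewrite !norm4_4E (sum_update2 (fun _ (x : R[i]) => sqmod x ^+ 2) jk w_off).
by rewrite wj wk !sqmodZ; ring.
Qed.

Lemma sqnorm_sub_rescale2 : sqnorm (fun i => w i - z i) =
  (cj - 1) ^+ 2 * sqmod (z j) + (ck - 1) ^+ 2 * sqmod (z k).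
Proof.
rewrite /sqnorm (sum_update2 (fun i (x : R[i]) => sqmod (x - z i)) jk w_off).
by rewrite big1 => [|i _]; rewrite ?subrr ?sqmod0 // wj wk !sqmodZ_subr; ring.
Qed.

Lemma cdot_rescale2 a : cdot a w = cdot a z +
  conjc (a j) * (cj%:C * z j - z j) + conjc (a k) * (ck%:C * z k - z k).
Proof.
rewrite /cdot (sum_update2 (fun i (x : R[i]) => conjc (a i) * x) jk w_off).
by rewrite wj wk !mulrBr.
Qed.

Lemma sqmod_cdot_rescale2_le a : cdot a z = 0 -> sqmod (cdot a w) <=
  2 * (sqmod (a j) * ((cj - 1) ^+ 2 * sqmod (z j))) +
  2 * (sqmod (a k) * ((ck - 1) ^+ 2 * sqmod (z k))).
Proof.
move=> az0; rewrite cdot_rescale2 az0 add0r; apply: le_trans (sqmodD_le _ _) _.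
by rewrite !sqmodM !sqmodJ !sqmodZ_subr.
Qed.

End Rescale2.

Definition sphere_descent g z := forall e : R, 0 < e ->
  exists w, [/\ sqnorm w = 1, sqnorm (fun k => w k - z k) < e & g w < g z].

Lemma local_min_no_sphere_descent g z :
  local_min_on_csphere g z -> ~ sphere_descent g z.
Proof.
move=> [_ [eps [eps0 zmin]]] /(_ (eps ^+ 2) (exprn_gt0 2 eps0)) [w [w1 wz gwz]].
have := zmin w (proj2 (on_csphereE w) w1); rewrite norm2_lt // => /(_ wz).
by rewrite leNgt gwz.
Qed.

End Vectors.

Section Descent.
Variables (R : realType) (n : nat) (a z : 'I_n -> R[i]) (beta : R).
Hypotheses (beta_gt0 : 0 < beta) (z_unit : sqnorm z = 1) (az0 : cdot a z = 0).

Lemma sphere_descent_two_zeros j k :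
  j != k -> z j = 0 -> z k = 0 -> sphere_descent (fobj a beta) z.
Proof.
move=> jk zj zk e e0.
have [u [au0 u_gt0 u_supp]] := exists_cdot_eq0_supp2 a jk.
have disj i : z i = 0 \/ u i = 0.
  have [->|ij] := eqVneq i j; first by left.
  have [->|ik] := eqVneq i k; [by left | by right; apply: u_supp].
set U := sqnorm u; set S := norm4_4 z; set V := norm4_4 u.
have S_gt0 : 0 < S by rewrite norm4_4_gt0 // z_unit.
have V_ge0 : 0 <= V by rewrite ltW // norm4_4_gt0.
have e2_gt0 : 0 < e / 2 by rewrite divr_gt0.
have US_gt0 : 0 < 2 * U * S by rewrite !mulr_gt0.
have [T T0 [[TU1 TUe] Tdec]] := for_small_pos_witness (for_small_pos_and
    (for_small_pos_and (for_small_pos_mulr_lt U ltr01)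
       (for_small_pos_mulr_lt U e2_gt0))
  (for_small_pos_mulr_lt (U ^+ 2 * S + V) US_gt0)).
have TU0 : 0 <= T * U by rewrite mulr_ge0 // ltW.
set c := Num.sqrt (1 - T * U); set t := Num.sqrt T.
have c2 : c ^+ 2 = 1 - T * U by rewrite sqr_sqrtr // subr_ge0 ltW.
have t2 : t ^+ 2 = T by rewrite sqr_sqrtr // ltW.
have c_dist : (c - 1) ^+ 2 <= (T * U) ^+ 2.
  rewrite (_ : (T * U) ^+ 2 = (1 - T * U - 1) ^+ 2); last by ring.
  by apply: sqr_sqrtr_sub1_le; rewrite subr_ge0 ltW.
exists (fun i => c%:C * z i + t%:C * u i); split.
- by rewrite sqnorm_disjoint // z_unit c2 t2 -/U; ring.
- have -> : sqnorm (fun i => c%:C * z i + t%:C * u i - z i) =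
            sqnorm (fun i => (c - 1)%:C * z i + t%:C * u i).
    by apply: eq_bigr => i _; rewrite rmorphB rmorph1; congr sqmod; ring.
  have TU2 : (T * U) ^+ 2 <= T * U by rewrite expr2 ler_piMl // ltW.
  rewrite sqnorm_disjoint // z_unit t2 mulr1 -/U; lra.
- rewrite !fobjE cdot_lin az0 au0 !mulr0 addr0 ltrD2l ltr_pM2l ?divr_gt0 //.
  rewrite norm4_4_disjoint // -/S -/V.
  have c4 : c ^+ 4 = (1 - T * U) ^+ 2 by rewrite -c2 -exprM.
  have t4 : t ^+ 4 = T ^+ 2 by rewrite -t2 -exprM.
  rewrite c4 t4.
  have gap : 0 < 2 * U * S - T * (U ^+ 2 * S + V) by rewrite subr_gt0.
  have := mulr_gt0 T0 gap; lra.
Qed.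

Lemma sphere_descent_unequal_moduli j k : z j != 0 -> z k != 0 ->
  sqmod (z j) != sqmod (z k) -> sphere_descent (fobj a beta) z.
Proof.
move=> zj zk pq e e0.
have jk : j != k by apply: contraNneq pq => ->.
set p := sqmod (z j); set q := sqmod (z k).
have p0 : 0 < p by rewrite sqmod_gt0.
have q0 : 0 < q by rewrite sqmod_gt0.
set D := `|p - q|; have D0 : 0 < D by rewrite normr_gt0 subr_eq0.
set X := sqmod (a j) / p + sqmod (a k) / q.
have pq_inv : 0 <= p^-1 + q^-1 by rewrite addr_ge0 // invr_ge0 ltW.
have [T T0 [[[Tp Tq] Tdec] Tdist]] := for_small_pos_witness (for_small_pos_and
  (for_small_pos_and
    (for_small_pos_and (for_small_pos_mulr_lt 1 p0) (for_small_pos_mulr_lt 1 q0))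
    (for_small_pos_mulr_lt (X + beta) (mulr_gt0 beta_gt0 D0)))
  (for_small_pos_sqr_mulr_lt e0 pq_inv)).
rewrite !mulr1 in Tp Tq.
have [s s2 sD] : exists2 s, s ^+ 2 = T ^+ 2 & s * (p - q) = - (T * D).
  by rewrite /D; case: (ltrP p q) => _; [exists T | exists (- T)];
    rewrite ?sqrrN //; ring.
have ps : 0 < p + s by nra.
have qs : 0 < q + - s by nra.
set cj := Num.sqrt ((p + s) / p); set ck := Num.sqrt ((q + - s) / q).
have cj2 : cj ^+ 2 * p = p + s.
  by rewrite sqr_sqrtr ?divfK ?gt_eqF // divr_ge0 // ltW.
have ck2 : ck ^+ 2 * q = q + - s.
  by rewrite sqr_sqrtr ?divfK ?gt_eqF // divr_ge0 // ltW.
have cj_dist := sqr_sqrt_ratio_sub1_le p0 (ltW ps).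
have ck_dist := sqr_sqrt_ratio_sub1_le q0 (ltW qs).
rewrite s2 -/cj in cj_dist; rewrite sqrrN s2 -/ck in ck_dist.
exists (rescale2 z j k cj ck); split.
- by rewrite sqnorm_rescale2 // z_unit -/p -/q; lra.
- by rewrite sqnorm_sub_rescale2 // -/p -/q; lra.
- have cdot_small : sqmod (cdot a (rescale2 z j k cj ck)) <= 2 * T ^+ 2 * X.
    have := sqmod_cdot_rescale2_le cj ck jk az0; rewrite -/p -/q.
    have := ler_wpM2l (sqmod_ge0 (a j)) cj_dist.
    have := ler_wpM2l (sqmod_ge0 (a k)) ck_dist.
    rewrite /X; lra.
  have quartic :
    (cj ^+ 4 - 1) * p ^+ 2 + (ck ^+ 4 - 1) * q ^+ 2 = 2 * T ^+ 2 - 2 * (T * D).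
    have cj4 : cj ^+ 4 * p ^+ 2 = (p + s) ^+ 2 by rewrite -cj2; ring.
    have ck4 : ck ^+ 4 * q ^+ 2 = (q + - s) ^+ 2 by rewrite -ck2; ring.
    lra.
  rewrite !fobjE norm4_4_rescale2 // -/p -/q -addrA quartic.
  rewrite az0 sqmod0 mulr0 add0r.
  have gap : 0 < beta * D - T * (X + beta) by rewrite subr_gt0.
  have := mulr_gt0 T0 gap; lra.
Qed.

End Descent.

Local Close Scope complex_scope.

Theorem theorem8 (R : realType) (n : nat) (a : 'I_n -> R[i]) (beta : R)
  (z : 'I_n -> R[i]) :
  0 < beta ->
  local_min_on_csphere (fobj a beta) z ->
  cdot a z = 0 ->
  (#|[set k | z k == 0%R]| <= 1)%N /\
  (forall j k : 'I_n, z j != 0 -> z k != 0 -> cmod (z j) = cmod (z k)).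
Proof.
move=> beta0 zmin az0; have z1 : sqnorm z = 1 by apply/on_csphereE; case: zmin.
have no_descent := local_min_no_sphere_descent zmin.
split.
- rewrite leqNgt; apply/negP => /card_gt1P [j [k [zj zk jk]]].
  rewrite !inE in zj zk.
  exact: no_descent (sphere_descent_two_zeros beta0 z1 az0 jk (eqP zj) (eqP zk)).
- move=> j k zj zk; have [eq_jk|neq_jk] := eqVneq (sqmod (z j)) (sqmod (z k)).
    exact: (congr1 Num.sqrt eq_jk).
  by case: (no_descent (sphere_descent_unequal_moduli beta0 z1 az0 zj zk neq_jk)).
Qed.
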